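(* Let $R$ be a commutative ring with identity, $\mathcal S$ an associative $R$-algebra with identity, $\mathcal M$ a $2$-torsion free bimodule over $\mathcal S$, $\delta$ a derivation on $\mathcal S$ and $f:\mathcal S\to\mathcal M$ a bimodule homomorphism over $\mathcal S$. If $D:\mathcal S\to\mathcal M$ is a Jordan $(\delta,f)$-derivation on $\mathcal M$, then $D(xyx)=D(x)yx+f(x)\delta(y)x+f(x)y\delta(x)$ for all $x,y\in\mathcal S$.
   Context: A derivation on $\mathcal S$ is an additive map $\delta$ with $\delta(ab)=\delta(a)b+a\delta(b)$. An additive map $D:\mathcal S\to\mathcal M$ is a Jordan $(\delta,f)$-derivation if $D(x^2)=D(x)x+f(x)\delta(x)$ for all $x\in\mathcal S$. $\mathcal M$ is $2$-torsion free if $2m=0$ implies $m=0$. *)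

From HB Require Import structures.
From mathcomp Require Import all_boot all_order all_algebra.
Set Implicit Arguments. Unset Strict Implicit. Unset Printing Implicit Defensive.
Import GRing.Theory.
Local Open Scope ring_scope.

Record is_bimodule (S : nzRingType) (M : zmodType)
    (lm : S -> M -> M) (rm : M -> S -> M) : Prop := IsBimodule {
  bm_lD : forall a b m, lm (a + b) m = lm a m + lm b m;
  bm_lDm : forall a m n, lm a (m + n) = lm a m + lm a n;
  bm_lM : forall a b m, lm (a * b) m = lm a (lm b m);
  bm_l1 : forall m, lm 1 m = m;
  bm_rD : forall m a b, rm m (a + b) = rm m a + rm m b;
  bm_rDm : forall m n a, rm (m + n) a = rm m a + rm n a;
  bm_rM : forall m a b, rm m (a * b) = rm (rm m a) b;
  bm_r1 : forall m, rm m 1 = m;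
  bm_lr : forall a m b, lm a (rm m b) = rm (lm a m) b
}.

Definition two_torsion_free (M : zmodType) : Prop :=
  forall m : M, m *+ 2 = 0 -> m = 0.

Definition is_derivation (S : nzRingType) (delta : S -> S) : Prop :=
  (forall a b, delta (a + b) = delta a + delta b) /\
  (forall a b, delta (a * b) = delta a * b + a * delta b).

Definition is_bimodule_hom (S : nzRingType) (M : zmodType)
    (lm : S -> M -> M) (rm : M -> S -> M) (f : S -> M) : Prop :=
  (forall a b, f (a + b) = f a + f b) /\
  (forall a x, f (a * x) = lm a (f x)) /\
  (forall x a, f (x * a) = rm (f x) a).

Definition is_jordan_df_derivation (S : nzRingType) (M : zmodType)
    (rm : M -> S -> M) (delta : S -> S) (f : S -> M) (D : S -> M) : Prop :=
  (forall a b, D (a + b) = D a + D b) /\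
  (forall x, D (x * x) = rm (D x) x + rm (f x) (delta x)).

(* Put L(a,b) := D(a)b + f(a)δ(b), written [leibniz a b].  L is biadditive,
   D(aa) = L(a,a), and linearizing gives D(ab + ba) = L(a,b) + L(b,a); hence
   also L(aa,b) = L(a,ab) and L(ab + ba, c) = L(a,bc) + L(b,ac).  Computing
   D(xP + Px), P = xy + yx, once by linearization and once as
   D(xxy + yxx) + 2D(xyx), these identities leave 2D(xyx) = 2L(x,yx), and
   L(x,yx) is the claimed right-hand side. *)

From HB Require Import structures.
From mathcomp Require Import all_boot all_order all_algebra.
Import GRing.Theory.
Local Open Scope ring_scope.

Lemma two_torsion_free_inj {M : zmodType} :
  two_torsion_free M -> injective (fun m : M => m *+ 2).
Proof.
move=> M_2tf m n /eqP; rewrite -subr_eq0 -mulrnBl => /eqP/M_2tf/eqP.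
by rewrite subr_eq0 => /eqP.
Qed.

Section JordanDerivation.

Variables (S : nzRingType) (M : zmodType) (rm : M -> S -> M).
Hypothesis rmDl : forall m n a, rm (m + n) a = rm m a + rm n a.
Hypothesis rmDr : forall m a b, rm m (a + b) = rm m a + rm m b.
Hypothesis rmA : forall m a b, rm m (a * b) = rm (rm m a) b.

Variables (delta : S -> S) (f D : S -> M).
Hypothesis delta_der : is_derivation delta.
Hypothesis fD : forall a b, f (a + b) = f a + f b.
Hypothesis fMr : forall a b, f (a * b) = rm (f a) b.
Hypothesis D_jordan : is_jordan_df_derivation rm delta f D.

Definition leibniz (a b : S) : M := rm (D a) b + rm (f a) (delta b).

Let deltaD : forall a b, delta (a + b) = delta a + delta b.
Proof. by case: delta_der. Qed.

Let deltaM : forall a b, delta (a * b) = delta a * b + a * delta b.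
Proof. by case: delta_der. Qed.

Let DD : forall a b, D (a + b) = D a + D b.
Proof. by case: D_jordan. Qed.

Lemma D_sqr (a : S) : D (a * a) = leibniz a a.
Proof. by case: D_jordan. Qed.

Lemma leibnizDl (a b c : S) : leibniz (a + b) c = leibniz a c + leibniz b c.
Proof. by rewrite /leibniz DD fD !rmDl addrACA. Qed.

Lemma leibnizDr (a b c : S) : leibniz a (b + c) = leibniz a b + leibniz a c.
Proof. by rewrite /leibniz deltaD !rmDr addrACA. Qed.

Lemma leibnizMr (a b c : S) :
  leibniz a (b * c) = rm (leibniz a b) c + rm (f (a * b)) (delta c).
Proof. by rewrite /leibniz deltaM !rmDr !rmA rmDl fMr addrA. Qed.

Lemma D_jordan_linear (a b : S) :
  D (a * b + b * a) = leibniz a b + leibniz b a.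
Proof.
have sqrD : (a + b) * (a + b) = a * a + b * b + (a * b + b * a).
  by rewrite mulrDl !mulrDr [RHS]addrACA (addrC (b * b)).
have := D_sqr (a + b).
rewrite sqrD DD [D (a * a + _)]DD !D_sqr leibnizDl !leibnizDr.
by rewrite (addrC (leibniz b a)) [X in _ = X]addrACA; move/addrI.
Qed.

Lemma leibniz_sqrMl (a b : S) : leibniz (a * a) b = leibniz a (a * b).
Proof. by rewrite leibnizMr /leibniz D_sqr. Qed.

Lemma leibniz_jordanMl (a b c : S) :
  leibniz (a * b + b * a) c = leibniz a (b * c) + leibniz b (a * c).
Proof.
by rewrite {1}/leibniz D_jordan_linear fD rmDl (rmDl (f _)) !leibnizMr addrACA.
Qed.

Hypothesis M_2tf : two_torsion_free M.

Lemma D_triple (x y : S) : D (x * y * x) = leibniz x (y * x).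
Proof.
pose P := x * y + y * x.
have expand : x * P + P * x = x * x * y + y * (x * x) + (x * y * x) *+ 2.
  by rewrite /P mulrDr mulrDl !mulrA mulr2n [RHS]addrACA (addrC (y * x * x)).
have := D_jordan_linear x P.
rewrite expand DD D_jordan_linear mulr2n DD leibnizDr leibniz_jordanMl.
rewrite -leibniz_sqrMl (addrC (leibniz x (y * x))) [X in _ = X]addrACA.
by move/addrI; rewrite -!mulr2n => /(two_torsion_free_inj M_2tf).
Qed.

End JordanDerivation.

Theorem lemma3p5 (R : comNzRingType) (S : algType R) (M : zmodType)
    (lm : S -> M -> M) (rm : M -> S -> M)
    (delta : S -> S) (f D : S -> M) :
  is_bimodule lm rm ->
  two_torsion_free M ->
  is_derivation delta ->
  is_bimodule_hom lm rm f ->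
  is_jordan_df_derivation rm delta f D ->
  forall x y : S,
    D (x * y * x) =
      rm (rm (D x) y) x + rm (rm (f x) (delta y)) x + rm (rm (f x) y) (delta x).
Proof.
move=> [_ _ _ _ rmDr rmDl rmA _ _] M_2tf delta_der [fD [_ fMr]] D_jordan x y.
rewrite (@D_triple _ _ rm rmDl rmDr rmA _ _ _ delta_der fD fMr D_jordan M_2tf).
case: delta_der => _ deltaM.
by rewrite /leibniz deltaM !rmDr !rmA addrA.
Qed.
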